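(* Let $\alpha\in\mathbb R$, let $(\mathfrak g,\varphi,\xi,\eta,g)$ be an almost $\alpha$-coK\''ahler Lie algebra, and let $\mathfrak h=\ker\eta$, $J=\varphi|_{\mathfrak h}$, $h=g|_{\mathfrak h\times\mathfrak h}$, $D=\mathrm{ad}_\xi|_{\mathfrak h}$. Then the following are equivalent: (i) $\mathcal L_\xi g=2\alpha(g-\eta\otimes\eta)$; (ii) $D+\alpha I$ is skew-adjoint with respect to $h$; (iii) $DJ=JD$; (iv) $\mathcal L_\xi\varphi=0$. In particular, when $\alpha=0$, condition (i) says that $\xi$ is Killing ($\mathcal L_\xi g=0$), i.e. each of (i)–(iv) is equivalent to $(\mathfrak g,\varphi,\xi,\eta,g)$ being $K$-cosymplectic.
   Context: For a Lie algebra, $d\eta(x,y)=-\eta([x,y])$ and $d\omega(x,y,z)=-\omega([x,y],z)-\omega([y,z],x)-\omega([z,x],y)$. An almost contact metric structure on a $(2n+1)$-dimensional Lie algebra $\mathfrak g$ is $(\varphi,\xi,\eta,g)$ with $\eta\in\mathfrak g^*$, $\varphi\in\mathrm{End}(\mathfrak g)$, $\xi\in\mathfrak g$, $g$ positive definite, $\eta(\xi)=1$, $\varphi^2=-I+\eta\otimes\xi$, $\eta\circ\varphi=0$, $g(\varphi x,\varphi y)=g(x,y)-\eta(x)\eta(y)$; $\Phi(x,y)=g(x,\varphi y)$. It is almost $\alpha$-coK\''ahler if $\eta\wedge\Phi^n\neq0$, $d\eta=0$, $d\Phi=2\alpha\,\eta\wedge\Phi$; for $\alpha=0$ it is called almost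 coK\''ahler, and an almost coK\''ahler Lie algebra is $K$-cosymplectic if $\xi$ is Killing. Lie derivatives along $\xi$ are those of the corresponding left-invariant tensors: $(\mathcal L_\xi g)(x,y)=-g([\xi,x],y)-g(x,[\xi,y])$, $\mathcal L_\xi\varphi=\mathrm{ad}_\xi\circ\varphi-\varphi\circ\mathrm{ad}_\xi$. *)

(* Real Lie algebras of dimension 2n+1, modelled on the
   coordinate space 'rV[R]_(2n+1) over an abstract real field R : realType. *)
From HB Require Import structures.
From mathcomp Require Import all_boot all_order all_algebra.
From mathcomp Require Import perm.
From mathcomp Require Import reals.
Set Implicit Arguments.
Unset Strict Implicit.
Unset Printing Implicit Defensive.
Import Order.TTheory GRing.Theory Num.Theory.
Local Open Scope ring_scope.

Notation LieV R n := 'rV[R]_(n.*2.+1).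

Section Defs.
Variables (R : realType) (n : nat).
Local Notation V := (LieV R n).

(* a Lie bracket: bilinear (left linearity + antisymmetry), antisymmetric, Jacobi *)
Definition lie_bracket (br : V -> V -> V) : Prop :=
  [/\ forall (a : R) x y z, br (a *: x + y) z = a *: br x z + br y z,
      forall x y, br x y = - br y x &
      forall x y z, br x (br y z) + br y (br z x) + br z (br x y) = 0].

Definition linmap (f : V -> V) : Prop :=
  forall (a : R) x y, f (a *: x + y) = a *: f x + f y.
Definition linform (f : V -> R) : Prop :=
  forall (a : R) x y, f (a *: x + y) = a * f x + f y.
Definition bilinform (b : V -> V -> R) : Prop :=
  (forall z, linform (fun x => b x z)) /\ (forall x, linform (b x)).

Record acm_structure (phi : V -> V) (xi : V) (eta : V -> R) (g : V -> V -> R)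
  : Prop := ACMStructure {
  acm_phi_lin : linmap phi;
  acm_eta_lin : linform eta;
  acm_g_bilin : bilinform g;
  acm_g_sym : forall x y, g x y = g y x;
  acm_g_posdef : forall x, x != 0 -> 0 < g x x;
  acm_eta_xi : eta xi = 1;
  acm_phi2 : forall x, phi (phi x) = - x + eta x *: xi;
  acm_eta_phi : forall x, eta (phi x) = 0;
  acm_g_phi : forall x y, g (phi x) (phi y) = g x y - eta x * eta y }.

Definition fund_form (phi : V -> V) (g : V -> V -> R) (x y : V) : R := g x (phi y).

(* the (2n+1)-form eta /\ Phi^n, up to a nonzero constant factor:
   the full alternation of eta (x) Phi (x) ... (x) Phi (n copies of Phi) *)
Definition eta_wedge_Phi_n (eta : V -> R) (Phi : V -> V -> R)
  (v : 'I_(n.*2.+1) -> V) : R :=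
  \sum_(s : 'S_(n.*2.+1))
     (-1) ^+ odd_perm s *
     (eta (v (s ord0)) *
      \prod_(i < n) Phi (v (s (inord i.*2.+1))) (v (s (inord i.*2.+2)))).

Definition d1 (br : V -> V -> V) (eta : V -> R) (x y : V) : R := - eta (br x y).
Definition d2 (br : V -> V -> V) (om : V -> V -> R) (x y z : V) : R :=
  - om (br x y) z - om (br y z) x - om (br z x) y.

(* wedge of a 1-form and a 2-form (determinant convention) *)
Definition wedge12 (eta : V -> R) (om : V -> V -> R) (x y z : V) : R :=
  eta x * om y z + eta y * om z x + eta z * om x y.

Definition almost_alpha_coKahler (br : V -> V -> V) (alpha : R)
  (phi : V -> V) (xi : V) (eta : V -> R) (g : V -> V -> R) : Prop :=
  [/\ acm_structure phi xi eta g,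
      exists v, eta_wedge_Phi_n eta (fund_form phi g) v != 0,
      forall x y, d1 br eta x y = 0 &
      forall x y z, d2 br (fund_form phi g) x y z
                    = 2 * alpha * wedge12 eta (fund_form phi g) x y z].

Definition lie_g (br : V -> V -> V) (xi : V) (g : V -> V -> R) (x y : V) : R :=
  - g (br xi x) y - g x (br xi y).
Definition lie_phi (br : V -> V -> V) (xi : V) (phi : V -> V) (x : V) : V :=
  br xi (phi x) - phi (br xi x).

Definition killing (br : V -> V -> V) (xi : V) (g : V -> V -> R) : Prop :=
  forall x y, lie_g br xi g x y = 0.

Definition K_cosymplectic (br : V -> V -> V)
  (phi : V -> V) (xi : V) (eta : V -> R) (g : V -> V -> R) : Prop :=
  almost_alpha_coKahler br 0 phi xi eta g /\ killing br xi g.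

End Defs.

(* Since i_xi Phi = 0 and eta vanishes on brackets, the structure equation
   dPhi = 2 alpha eta /\ Phi evaluated with xi in one slot reads
   L_xi Phi = 2 alpha Phi.  As Phi(x, y) = g(x, phi y), this identity ties L_xi g
   to L_xi phi.  If phi commutes with ad_xi it turns, after splitting
   y = phi (- phi y) + eta(y) xi, into L_xi g = 2 alpha (g - eta (x) eta).
   Conversely, if ad_xi + alpha is skew-adjoint on ker eta, it shows that
   L = [xi, phi x] - phi [xi, x] is g-isotropic, hence L = 0. *)
From HB Require Import structures.
From mathcomp Require Import all_boot all_order all_algebra.
From mathcomp Require Import reals.
From mathcomp Require Import lra.
Import Order.TTheory GRing.Theory Num.Theory.
Local Open Scope ring_scope.
Set Implicit Arguments.
Unset Strict Implicit.

Section LinearFor.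
Variables (K : pzRingType) (U : lmodType K) (W : zmodType).
Variables (s : GRing.Scale.law K W) (f : U -> W) (lin_f : linear_for s f).

Lemma linear_forB x y : f (x - y) = f x - f y.
Proof. exact: zmod_morphism_linear. Qed.

Lemma linear_for0 : f 0 = 0.
Proof. by rewrite -[0 in LHS](subrr (0 : U)) linear_forB subrr. Qed.

Lemma linear_forN x : f (- x) = - f x.
Proof. by rewrite -[- x]sub0r linear_forB linear_for0 sub0r. Qed.

Lemma linear_forD x y : f (x + y) = f x + f y.
Proof. exact: (GRing.semilinear_linear lin_f).2. Qed.

End LinearFor.

Lemma linear_forZ (K : pzRingType) (U W : lmodType K) (f : U -> W) :
  linear f -> forall a x, f (a *: x) = a *: f x.
Proof. exact: scalable_linear. Qed.

Lemma scalar_forZ (K : pzRingType) (U : lmodType K) (f : U -> K) :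
  scalar f -> forall a x, f (a *: x) = a * f x.
Proof. exact: scalable_linear. Qed.

Section AlmostContactMetric.
Variables (R : realType) (n : nat).
Local Notation V := (LieV R n).
Variables (phi : V -> V) (xi : V) (eta : V -> R) (g : V -> V -> R).
Hypothesis acm : acm_structure phi xi eta g.

Let lin_phi : linear phi := acm_phi_lin acm.
Let lin_eta : scalar eta := acm_eta_lin acm.
Let lin_gl z : scalar (g^~ z) := (acm_g_bilin acm).1 z.
Let lin_gr x : scalar (g x) := (acm_g_bilin acm).2 x.

Lemma acm_phi_xi : phi xi = 0.
Proof.
have phi2_xi : phi (phi xi) = 0 by rewrite (acm_phi2 acm) (acm_eta_xi acm) scale1r addNr.
have := acm_phi2 acm (phi xi).
rewrite phi2_xi (linear_for0 lin_phi) (acm_eta_phi acm) scale0r addr0.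
by move/eqP; rewrite eq_sym oppr_eq0 => /eqP.
Qed.

Lemma acm_g_xi x : g x xi = eta x.
Proof.
have := acm_g_phi acm x xi.
rewrite acm_phi_xi (linear_for0 (lin_gr (phi x))) (acm_eta_xi acm) mulr1 => /eqP.
by rewrite eq_sym subr_eq0 => /eqP.
Qed.

Lemma acm_g_phi_skew x y : g x (phi y) = - g (phi x) y.
Proof.
have := acm_g_phi acm x (phi y).
rewrite (acm_eta_phi acm) mulr0 subr0 (acm_phi2 acm) (linear_forD (lin_gr (phi x))).
rewrite (linear_forN (lin_gr (phi x))) (scalar_forZ (lin_gr (phi x))) acm_g_xi.
by rewrite (acm_eta_phi acm) mulr0 addr0 => <-.
Qed.

Lemma acm_fund_form_antisym x y : fund_form phi g x y = - fund_form phi g y x.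
Proof. by rewrite /fund_form acm_g_phi_skew (acm_g_sym acm). Qed.

Lemma acm_eta_kernel_proj x : eta (x - eta x *: xi) = 0.
Proof.
by rewrite (linear_forB lin_eta) (scalar_forZ lin_eta) (acm_eta_xi acm) mulr1 subrr.
Qed.

Lemma acm_decomp y : y = phi (- phi y) + eta y *: xi.
Proof. by rewrite (linear_forN lin_phi) (acm_phi2 acm) opprD opprK subrK. Qed.

Lemma acm_g_eq0 x : g x x = 0 -> x = 0.
Proof.
move=> gxx0; case: (eqVneq x 0) => // /(acm_g_posdef acm).
by rewrite gxx0 ltxx.
Qed.

Lemma acm_lie_g_skew_ker (br : V -> V -> V) (alpha : R) :
  (forall x y, lie_g br xi g x y = 2 * alpha * (g x y - eta x * eta y)) ->
  forall x y, eta x = 0 -> eta y = 0 ->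
    g (br xi x + alpha *: x) y = - g x (br xi y + alpha *: y).
Proof.
move=> lie_gE x y ex ey; have := lie_gE x y; rewrite /lie_g ex mul0r subr0.
rewrite (linear_forD (lin_gl y)) (linear_forD (lin_gr x)).
rewrite (scalar_forZ (lin_gl y)) (scalar_forZ (lin_gr x)) => h; lra.
Qed.

End AlmostContactMetric.

Section LieBracket.
Variables (R : realType) (n : nat) (br : LieV R n -> LieV R n -> LieV R n).
Hypothesis lie_br : lie_bracket br.

Lemma lie_bracket_linr x : linmap (br x).
Proof.
have [linl anti _] := lie_br; move=> a y z.
by rewrite anti linl (anti y x) (anti z x) scalerN -opprD opprK.
Qed.

Lemma lie_bracket_xx x : br x x = 0.
Proof.
have [_ anti _] := lie_br.
have : br x x *+ 2 = 0 by rewrite mulr2n {1}anti addNr.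
by move/eqP; rewrite -scaler_nat scaler_eq0 pnatr_eq0 => /eqP.
Qed.

End LieBracket.

Section AlmostCoKahler.
Variables (R : realType) (n : nat) (alpha : R).
Local Notation V := (LieV R n).
Variables (br : V -> V -> V) (phi : V -> V) (xi : V) (eta : V -> R)
  (g : V -> V -> R).
Hypotheses (lie_br : lie_bracket br)
  (coK : almost_alpha_coKahler br alpha phi xi eta g).

Let acm : acm_structure phi xi eta g := let: And4 acm _ _ _ := coK in acm.
Let lin_eta : scalar eta := acm_eta_lin acm.
Let lin_gl z : scalar (g^~ z) := (acm_g_bilin acm).1 z.
Let lin_gr x : scalar (g x) := (acm_g_bilin acm).2 x.
Let lin_phi : linear phi := acm_phi_lin acm.
Let lin_ad : linear (br xi) := lie_bracket_linr lie_br xi.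

Lemma coKahler_eta_bracket x y : eta (br x y) = 0.
Proof.
have [_ _ d_eta _] := coK.
by apply/eqP; rewrite -oppr_eq0; apply/eqP; exact: d_eta.
Qed.

(* Cartan's formula: evaluate dPhi = 2 alpha eta /\ Phi on (xi, y, x); the
   terms containing i_xi Phi = 0 drop out. *)
Lemma coKahler_lie_fund_form x y :
  lie_g br xi (fund_form phi g) x y = 2 * alpha * fund_form phi g x y.
Proof.
have [_ _ _ d_Phi] := coK.
have := d_Phi xi y x; rewrite /d2 /wedge12 (acm_eta_xi acm) mul1r.
have Phi_xi_r w : fund_form phi g w xi = 0.
  by rewrite /fund_form (acm_phi_xi acm) (linear_for0 (lin_gr w)).
have Phi_xi_l w : fund_form phi g xi w = 0.
  by rewrite (acm_fund_form_antisym acm) Phi_xi_r oppr0.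
rewrite !Phi_xi_r Phi_xi_l !mulr0 !addr0 subr0.
have [_ anti _] := lie_br; rewrite (anti x xi) /fund_form (linear_forN (lin_gl _)).
rewrite /lie_g -!/(fund_form phi g _ _).
rewrite (acm_fund_form_antisym acm (br xi y)) (acm_fund_form_antisym acm y).
move=> h; lra.
Qed.

Lemma coKahler_skew_ker_commute :
  (forall x y, eta x = 0 -> eta y = 0 ->
     g (br xi x + alpha *: x) y = - g x (br xi y + alpha *: y)) ->
  forall x, eta x = 0 -> br xi (phi x) = phi (br xi x).
Proof.
move=> skew x ex; apply/eqP; rewrite -subr_eq0; apply/eqP.
set L := br xi (phi x) - phi (br xi x).
have eL : eta L = 0.
  by rewrite (linear_forB lin_eta) coKahler_eta_bracket (acm_eta_phi acm) subr0.
have gLL : g L L = g L (br xi (phi x)) - g L (phi (br xi x)).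
  by rewrite {2}/L (linear_forB (lin_gr L)).
clearbody L; apply: (acm_g_eq0 acm); rewrite gLL.
have := skew L (phi x) eL (acm_eta_phi acm x).
have := coKahler_lie_fund_form L x; rewrite /lie_g /fund_form.
rewrite (linear_forD (lin_gl _)) (linear_forD (lin_gr L)).
rewrite (scalar_forZ (lin_gl _)) (scalar_forZ (lin_gr L)); lra.
Qed.

Lemma coKahler_commute_lie_phi :
  (forall x, eta x = 0 -> br xi (phi x) = phi (br xi x)) ->
  forall x, lie_phi br xi phi x = 0.
Proof.
move=> comm x; rewrite /lie_phi -[x](subrK (eta x *: xi)).
move: (acm_eta_kernel_proj acm x); move: (x - _) => y ey.
rewrite (linear_forD lin_phi) (linear_forZ lin_phi) (acm_phi_xi acm) scaler0 addr0.
rewrite (linear_forD lin_ad) (linear_forZ lin_ad) (lie_bracket_xx lie_br).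
by rewrite scaler0 addr0 comm // subrr.
Qed.

Lemma coKahler_lie_phi_lie_g :
  (forall x, lie_phi br xi phi x = 0) ->
  forall x y, lie_g br xi g x y = 2 * alpha * (g x y - eta x * eta y).
Proof.
move=> lie_phi0 x y.
have comm u : br xi (phi u) = phi (br xi u).
  by apply/eqP; rewrite -subr_eq0; apply/eqP; exact: lie_phi0.
have gy : g x y = g x (phi (- phi y)) + eta y * eta x.
  rewrite {1}(acm_decomp acm y) (linear_forD (lin_gr x)) (scalar_forZ (lin_gr x)).
  by rewrite (acm_g_xi acm).
rewrite [in LHS](acm_decomp acm y) gy; set w := - phi y.
rewrite /lie_g (linear_forD lin_ad) (linear_forZ lin_ad) comm.
rewrite (lie_bracket_xx lie_br) scaler0 addr0 (linear_forD (lin_gr _)).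
rewrite (scalar_forZ (lin_gr _)) (acm_g_xi acm) coKahler_eta_bracket mulr0 addr0.
have := coKahler_lie_fund_form x w; rewrite /lie_g /fund_form => h; lra.
Qed.

End AlmostCoKahler.

Theorem mainTheorem5 (R : realType) (n : nat) (alpha : R)
  (br : LieV R n -> LieV R n -> LieV R n) (phi : LieV R n -> LieV R n)
  (xi : LieV R n) (eta : LieV R n -> R) (g : LieV R n -> LieV R n -> R) :
  lie_bracket br ->
  almost_alpha_coKahler br alpha phi xi eta g ->
  [<-> (* (i)   L_xi g = 2 alpha (g - eta (x) eta) *)
       (forall x y, lie_g br xi g x y = 2 * alpha * (g x y - eta x * eta y));
       (* (ii)  D + alpha I skew-adjoint w.r.t. h on h = ker eta, D = ad_xi|_h *)
       (forall x y, eta x = 0 -> eta y = 0 ->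
          g (br xi x + alpha *: x) y = - g x (br xi y + alpha *: y));
       (* (iii) DJ = JD on h, J = phi|_h *)
       (forall x, eta x = 0 -> br xi (phi x) = phi (br xi x));
       (* (iv)  L_xi phi = 0 *)
       (forall x, lie_phi br xi phi x = 0)]
  /\ (alpha = 0 ->
      ((forall x y, lie_g br xi g x y = 2 * alpha * (g x y - eta x * eta y))
         <-> killing br xi g)
      /\ (killing br xi g <-> K_cosymplectic br phi xi eta g)).
Proof.
move=> lie_br coK; have [acm _ _ _] := coK; split.
  tfae.
  - exact: (acm_lie_g_skew_ker acm).
  - exact: (coKahler_skew_ker_commute lie_br coK).
  - exact: (coKahler_commute_lie_phi lie_br coK).
  - exact: (coKahler_lie_phi_lie_g lie_br coK).
move=> alpha0; subst alpha; split.
  by split=> lie_g0 x y; have := lie_g0 x y; rewrite mulr0 mul0r.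
by split=> [|[]].
Qed.
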